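(* Let $P\in S^n$. Then, with respect to the Pompeiu-Hausdorff metric $h$: (1) the map $\bigcirc_{{\rm Wulff},P}:\mathcal{H}_{\rm Wulff}(S^n,P)\to\mathcal{H}_{\rm Wulff}(S^n,P)$, $W\mapsto W^\circ$, is a well-defined bijective isometry, i.e. $h(W_1^\circ,W_2^\circ)=h(W_1,W_2)$ for all $W_1,W_2\in\mathcal{H}_{\rm Wulff}(S^n,P)$; (2) the map $\overline{\bigcirc_{{\rm Wulff},P}}:\overline{\mathcal{H}_{\rm Wulff}(S^n,P)}\to\overline{\mathcal{H}_{\rm Wulff}(S^n,P)}$, $W\mapsto W^\circ$, is a well-defined bijective isometry, i.e. $h(W_1^\circ,W_2^\circ)=h(W_1,W_2)$ for all $W_1,W_2\in\overline{\mathcal{H}_{\rm Wulff}(S^n,P)}$.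
   Context: $n$ is a positive integer and $S^n$ is the unit sphere in $\mathbb{R}^{n+1}$. For $P,Q\in S^n$, $|PQ|=\arccos(P\cdot Q)$ is the spherical (geodesic) distance; $S^n$ is regarded as a metric space with this distance. For $P\in S^n$, $H(P)=\{Q\in S^n: P\cdot Q\ge 0\}$. For a non-empty $W\subset S^n$, its spherical polar set is $W^\circ=\bigcap_{P\in W}H(P)$. $\mathcal{H}(S^n)$ is the set of non-empty closed subsets of $S^n$ with the Pompeiu-Hausdorff metric $h(A,B)=\max\{\max_{x\in A}\min_{y\in B}|xy|,\ \max_{y\in B}\min_{x\in A}|xy|\}$. A subset $W\subset S^n$ is hemispherical if there is $P\in S^n$ with $W\cap H(P)=\emptyset$. For $P,Q$ in a hemispherical set $W$, the arc $PQ=\{((1-t)P+tQ)/\|(1-t)P+tQ\|: 0\le t\le 1\}$. A hemispherical $W$ is spherical convex if $PQ\subset W$ for all $P,Q\in W$; it is a spherical convex body if it is moreover closed and has an interior point. For $P\in S^n$, $\mathcal{H}_{\rm Wulff}(S^n,P)$ is the set of $W\in\mathcal{H}(S^n)$ such that $W\cap H(-P)=\emptyset$, $P$ is an interior point of $W$, and $W$ is a spherical convex body; $\overline{\mathcal{H}_{\rm Wulff}(S^n,P)}$ is its closure in $(\mathcal{H}(S^n),h)$. *)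

From Stdlib Require Import Reals Lra ClassicalEpsilon.
Open Scope R_scope.

(* Points of R^{n+1} are represented by functions nat -> R whose coordinates
   of index > n vanish; coordinates 0..n are the genuine ones. *)
Definition pt := nat -> R.
Definition pset := pt -> Prop.

Definition dot (n : nat) (x y : pt) : R := sum_f_R0 (fun i => x i * y i) n.
Definition vnorm (n : nat) (x : pt) : R := sqrt (dot n x x).
Definition vcomb (a : R) (x : pt) (b : R) (y : pt) : pt := fun i => a * x i + b * y i.
Definition vscale (a : R) (x : pt) : pt := fun i => a * x i.
Definition vopp (x : pt) : pt := fun i => - x i.

Definition sphere (n : nat) (x : pt) : Prop :=
  dot n x x = 1 /\ (forall i, (n < i)%nat -> x i = 0).

Definition sdist (n : nat) (P Q : pt) : R := acos (dot n P Q).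

Definition hemi (n : nat) (P : pt) : pset := fun Q => sphere n Q /\ 0 <= dot n P Q.

Definition polar (n : nat) (W : pset) : pset :=
  fun Q => sphere n Q /\ forall P, W P -> 0 <= dot n P Q.

Definition set_eq (A B : pset) : Prop := forall x, A x <-> B x.

Definition sclosed (n : nat) (W : pset) : Prop :=
  (forall x, W x -> sphere n x) /\
  forall x, sphere n x ->
    (forall eps, 0 < eps -> exists y, W y /\ sdist n x y < eps) -> W x.

Definition in_HS (n : nat) (W : pset) : Prop :=
  (exists x, W x) /\ sclosed n W.

(* Supremum of a set of reals (value 0 if not bounded-above or empty,
   irrelevant for the sets used below). *)
Definition Rsup (E : R -> Prop) : R :=
  match excluded_middle_informative (bound E /\ exists x, E x) with
  | left H => proj1_sig (completeness E (proj1 H) (proj2 H))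
  | right _ => 0
  end.

Definition Rinf (E : R -> Prop) : R := - Rsup (fun r => E (- r)).

Definition dist_pt_set (n : nat) (x : pt) (B : pset) : R :=
  Rinf (fun r => exists y, B y /\ r = sdist n x y).

Definition hexcess (n : nat) (A B : pset) : R :=
  Rsup (fun r => exists x, A x /\ r = dist_pt_set n x B).

Definition hdist (n : nat) (A B : pset) : R :=
  Rmax (hexcess n A B) (hexcess n B A).

Definition hemispherical (n : nat) (W : pset) : Prop :=
  exists P, sphere n P /\ forall Q, W Q -> ~ hemi n P Q.

Definition arc_pt (n : nat) (P Q : pt) (t : R) : pt :=
  let v := vcomb (1 - t) P t Q in vscale (/ vnorm n v) v.

Definition sconvex (n : nat) (W : pset) : Prop :=
  hemispherical n W /\
  forall P Q, W P -> W Q -> forall t, 0 <= t <= 1 -> W (arc_pt n P Q t).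

Definition interior_pt (n : nat) (W : pset) (P : pt) : Prop :=
  W P /\ exists eps, 0 < eps /\
    forall Q, sphere n Q -> sdist n P Q < eps -> W Q.

Definition sconvex_body (n : nat) (W : pset) : Prop :=
  sconvex n W /\ sclosed n W /\ exists Q, interior_pt n W Q.

Definition HWulff (n : nat) (P : pt) (W : pset) : Prop :=
  in_HS n W /\ (forall Q, W Q -> ~ hemi n (vopp P) Q) /\
  interior_pt n W P /\ sconvex_body n W.

Definition HWulff_cl (n : nat) (P : pt) (W : pset) : Prop :=
  in_HS n W /\
  forall eps, 0 < eps -> exists V, HWulff n P V /\ hdist n W V < eps.

From Stdlib Require Import Reals Lra Lia Psatz.
From Stdlib Require Import Classical ClassicalEpsilon FunctionalExtensionality PropExtensionality.
Open Scope R_scope.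

(* For W closed, spherically convex, containing P and contained in H(P), the nearest point of
   the cone over W to a point x outside W produces a point z of the polar W° with
   dist(x, W) <= |xz| - pi/2; in particular W°° = W.  Conversely |zx| - pi/2 <= dist(z, A°)
   whenever x lies in A = A°°, so the excess of A over B equals the excess of B° over A°, and
   polarity preserves the Pompeiu-Hausdorff distance.  Wulff shapes and their Hausdorff limits
   belong to this class, and the polar of a Wulff shape is again one because, W being compact,
   P.w is bounded below by a positive constant on W. *)

Lemma Rabs_le_bounds (a b : R) : Rabs a <= b -> - b <= a <= b.
Proof.
  intros H. pose proof (Rle_abs a). pose proof (Rle_abs (- a)).
  rewrite Rabs_Ropp in *. lra.
Qed.

Lemma Rdiv_le_0_compat (a b : R) : 0 <= a -> 0 < b -> 0 <= a / b.
Proof. intros. unfold Rdiv. apply Rmult_le_pos; [|left; apply Rinv_0_lt_compat]; assumption. Qed.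

Lemma inv_INR_S_pos (k : nat) : 0 < / INR (S k).
Proof. apply Rinv_0_lt_compat, lt_0_INR; lia. Qed.

Lemma inv_INR_S_le (k m : nat) : (m <= k)%nat -> (0 < m)%nat -> / INR (S k) <= / INR m.
Proof.
  intros. apply Rinv_le_contravar; [apply lt_0_INR | apply le_INR]; lia.
Qed.

Lemma Rsup_is_lub (E : R -> Prop) : bound E -> (exists x, E x) -> is_lub E (Rsup E).
Proof.
  intros Hb He. unfold Rsup. destruct excluded_middle_informative as [H | H].
  - destruct (completeness E (proj1 H) (proj2 H)); assumption.
  - tauto.
Qed.

Lemma Rsup_upper (E : R -> Prop) (x : R) : bound E -> E x -> x <= Rsup E.
Proof. intros Hb Hx. apply (Rsup_is_lub E Hb (ex_intro _ x Hx)); assumption. Qed.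

Lemma Rsup_least (E : R -> Prop) (m : R) :
  (exists x, E x) -> (forall x, E x -> x <= m) -> Rsup E <= m.
Proof.
  intros He H. assert (Hb : bound E) by (exists m; exact H).
  apply (Rsup_is_lub E Hb He). exact H.
Qed.

Lemma Rinf_lower (E : R -> Prop) (m x : R) : (forall y, E y -> m <= y) -> E x -> Rinf E <= x.
Proof.
  intros Hm Hx. unfold Rinf.
  assert (- x <= Rsup (fun r => E (- r))); [|lra].
  apply Rsup_upper.
  - exists (- m). intros y Hy. specialize (Hm _ Hy). lra.
  - rewrite Ropp_involutive. exact Hx.
Qed.

Lemma Rinf_greatest (E : R -> Prop) (m : R) :
  (exists x, E x) -> (forall x, E x -> m <= x) -> m <= Rinf E.
Proof.
  intros [x Hx] H. unfold Rinf.
  assert (Rsup (fun r => E (- r)) <= - m); [|lra].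
  apply Rsup_least.
  - exists (- x). rewrite Ropp_involutive. exact Hx.
  - intros y Hy. specialize (H _ Hy). lra.
Qed.

Lemma Rinf_approx (E : R -> Prop) (m eps : R) :
  (forall y, E y -> m <= y) -> (exists x, E x) -> 0 < eps ->
  exists x, E x /\ x < Rinf E + eps.
Proof.
  intros Hm HE Heps. apply NNPP. intros Hno.
  assert (Rinf E + eps <= Rinf E); [|lra].
  apply Rinf_greatest; [exact HE|]. intros x Hx.
  destruct (Rle_lt_dec (Rinf E + eps) x); [assumption|].
  exfalso. apply Hno. exists x. split; assumption.
Qed.

Lemma Un_cv_const (c : R) : Un_cv (fun _ => c) c.
Proof. intros eps He. exists 0%nat. intros. unfold Rdist. rewrite Rminus_diag, Rabs_R0. lra. Qed.

Lemma Un_cv_eventually_gt (u : nat -> R) (L a : R) :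
  Un_cv u L -> a < L -> exists N, forall m, (m >= N)%nat -> a < u m.
Proof.
  intros H Ha. destruct (H (L - a)) as [N HN]; [lra|]. exists N. intros m Hm.
  specialize (HN m Hm). unfold Rdist in HN. apply Rabs_def2 in HN. lra.
Qed.

Lemma Un_cv_eventually_lt (u : nat -> R) (L a : R) :
  Un_cv u L -> L < a -> exists N, forall m, (m >= N)%nat -> u m < a.
Proof.
  intros H Ha. destruct (H (a - L)) as [N HN]; [lra|]. exists N. intros m Hm.
  specialize (HN m Hm). unfold Rdist in HN. apply Rabs_def2 in HN. lra.
Qed.

Lemma Un_cv_le_of_le_inv (u : nat -> R) (L a : R) :
  Un_cv u L -> (forall m, u m <= a + / INR (S m)) -> L <= a.
Proof.
  intros H Hm. destruct (Rle_lt_dec L a) as [|Hl]; [assumption|]. exfalso.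
  destruct (archimed_cor1 ((L - a) / 2)) as [N1 [HN1 HN1']]; [lra|].
  destruct (Un_cv_eventually_gt u L (a + (L - a) / 2) H) as [N2 HN2]; [lra|].
  specialize (HN2 (N1 + N2)%nat ltac:(lia)). specialize (Hm (N1 + N2)%nat).
  pose proof (inv_INR_S_le (N1 + N2) N1 ltac:(lia) HN1'). lra.
Qed.

Definition strictly_increasing (phi : nat -> nat) : Prop := forall k, (phi k < phi (S k))%nat.

Lemma strictly_increasing_ge (phi : nat -> nat) :
  strictly_increasing phi -> forall k, (k <= phi k)%nat.
Proof. intros H k; induction k; [lia|]. specialize (H k); lia. Qed.

Lemma strictly_increasing_le (phi : nat -> nat) :
  strictly_increasing phi -> forall k j, (k <= j)%nat -> (phi k <= phi j)%nat.
Proof. intros H k j Hkj; induction Hkj; [lia|]. specialize (H m); lia. Qed.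

Lemma Un_cv_subseq (u : nat -> R) (L : R) (phi : nat -> nat) :
  strictly_increasing phi -> Un_cv u L -> Un_cv (fun k => u (phi k)) L.
Proof.
  intros Hp H eps He. destruct (H eps He) as [N HN]. exists N. intros k Hk.
  apply HN. pose proof (strictly_increasing_ge phi Hp k). lia.
Qed.

Lemma bounded_seq_convergent_subseq (a : nat -> R) : (forall k, -1 <= a k <= 1) ->
  exists phi l, strictly_increasing phi /\ Un_cv (fun k => a (phi k)) l.
Proof.
  intros Hb.
  destruct (Bolzano_Weierstrass a (fun c => -1 <= c <= 1) (compact_P3 (-1) 1) Hb) as [l Hl].
  assert (Hc : forall k N, exists p, (N <= p)%nat /\ Rabs (a p - l) < / INR (S k)).
  { intros k N. destruct (Hl (disc l (mkposreal _ (inv_INR_S_pos k))) N) as [p [Hp1 Hp2]].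
    - exists (mkposreal _ (inv_INR_S_pos k)). intros y Hy; exact Hy.
    - exists p; split; assumption. }
  set (g := fun k N => proj1_sig (constructive_indefinite_description _ (Hc k N))).
  assert (Hg : forall k N, (N <= g k N)%nat /\ Rabs (a (g k N) - l) < / INR (S k)).
  { intros k N. unfold g. destruct constructive_indefinite_description; assumption. }
  set (phi := fix f k := match k with O => g O O | S k' => g (S k') (S (f k')) end).
  exists phi, l. split.
  - intros k. simpl. pose proof (proj1 (Hg (S k) (S (phi k)))). lia.
  - intros eps He. destruct (archimed_cor1 eps He) as [N [HN HN']]. exists N. intros k Hk.
    unfold Rdist.
    assert (Rabs (a (phi k) - l) < / INR (S k)) by (destruct k; simpl; apply Hg).
    pose proof (inv_INR_S_le k N Hk HN'). lra.
Qed.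

Lemma acos_le_compat (s t : R) : -1 <= s <= 1 -> -1 <= t <= 1 -> s <= t -> acos t <= acos s.
Proof.
  intros Hs Ht H. destruct (Rle_lt_dec (acos t) (acos s)) as [|Hl]; [assumption|].
  pose proof (acos_bound t). pose proof (acos_bound s).
  pose proof (cos_decreasing_1 (acos s) (acos t) ltac:(lra) ltac:(lra) ltac:(lra) ltac:(lra) Hl).
  rewrite !cos_acos in H2 by assumption. lra.
Qed.

Lemma acos_lt_compat (s t : R) : -1 <= s <= 1 -> -1 <= t <= 1 -> s < t -> acos t < acos s.
Proof.
  intros Hs Ht H. destruct (Rlt_le_dec (acos t) (acos s)) as [|Hl]; [assumption|].
  destruct (Req_dec (acos t) (acos s)) as [E | E].
  - assert (cos (acos t) = cos (acos s)) by (rewrite E; reflexivity).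
    rewrite !cos_acos in H0 by assumption. lra.
  - pose proof (acos_le_compat s t Hs Ht ltac:(lra)). lra.
Qed.

Lemma acos_lt_inv (s t : R) : -1 <= s <= 1 -> -1 <= t <= 1 -> acos t < acos s -> s < t.
Proof.
  intros Hs Ht H. destruct (Rlt_le_dec s t) as [|Hl]; [assumption|].
  pose proof (acos_le_compat t s Ht Hs Hl). lra.
Qed.

Lemma acos_small (eps : R) : 0 < eps -> exists c, -1 <= c < 1 /\ acos c <= eps.
Proof.
  intros He. set (e := Rmin eps PI).
  assert (0 < e) by (apply Rmin_glb_lt; [assumption | apply PI_RGT_0]).
  assert (e <= PI) by apply Rmin_r. assert (e <= eps) by apply Rmin_l.
  exists (cos e). repeat split.
  - apply COS_bound.
  - rewrite <- cos_0. apply cos_decreasing_1; lra.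
  - rewrite acos_cos; lra.
Qed.

(** * Euclidean geometry of R^(n+1) and of the sphere *)

Section Vectors.

Variable n : nat.

Definition vsub (x y : pt) : pt := fun i => x i - y i.
Definition vzero : pt := fun _ => 0.
Definition sqdist (x y : pt) : R := dot n (vsub x y) (vsub x y).
Definition vanish_above (x : pt) : Prop := forall i, (n < i)%nat -> x i = 0.
Definition normalize (v : pt) : pt := vscale (/ vnorm n v) v.

Lemma dot_comm (x y : pt) : dot n x y = dot n y x.
Proof. apply sum_eq. intros; ring. Qed.

Lemma dot_vcomb_l (a b : R) (x y z : pt) :
  dot n (vcomb a x b y) z = a * dot n x z + b * dot n y z.
Proof.
  unfold dot, vcomb. rewrite !scal_sum, <- plus_sum. apply sum_eq. intros; ring.
Qed.

Lemma dot_vcomb_r (a b : R) (x y z : pt) :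
  dot n z (vcomb a x b y) = a * dot n z x + b * dot n z y.
Proof. rewrite dot_comm, dot_vcomb_l, (dot_comm x), (dot_comm y). reflexivity. Qed.

Lemma dot_vscale_l (a : R) (x z : pt) : dot n (vscale a x) z = a * dot n x z.
Proof. unfold dot, vscale. rewrite scal_sum. apply sum_eq. intros; ring. Qed.

Lemma dot_vscale_r (a : R) (x z : pt) : dot n z (vscale a x) = a * dot n z x.
Proof. rewrite dot_comm, dot_vscale_l, dot_comm. reflexivity. Qed.

Lemma dot_vopp_l (x z : pt) : dot n (vopp x) z = - dot n x z.
Proof.
  replace (vopp x) with (vscale (-1) x)
    by (apply functional_extensionality; intro; unfold vopp, vscale; ring).
  rewrite dot_vscale_l. ring.
Qed.

Lemma dot_vopp_r (x z : pt) : dot n z (vopp x) = - dot n z x.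
Proof. rewrite dot_comm, dot_vopp_l, dot_comm. reflexivity. Qed.

Lemma vsub_vcomb (x y : pt) : vsub x y = vcomb 1 x (-1) y.
Proof. apply functional_extensionality; intro; unfold vsub, vcomb; ring. Qed.

Lemma dot_vsub_l (x y z : pt) : dot n (vsub x y) z = dot n x z - dot n y z.
Proof. rewrite vsub_vcomb, dot_vcomb_l. ring. Qed.

Lemma dot_vsub_r (x y z : pt) : dot n z (vsub x y) = dot n z x - dot n z y.
Proof. rewrite vsub_vcomb, dot_vcomb_r. ring. Qed.

Lemma dot_vzero_l (y : pt) : dot n vzero y = 0.
Proof. unfold dot, vzero. induction n as [|m IH]; simpl; [|rewrite IH]; ring. Qed.

Lemma dot_self_ge0 (x : pt) : 0 <= dot n x x.
Proof. apply cond_pos_sum. intros; apply Rle_0_sqr. Qed.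

Lemma coord_sqr_le_dot_self (x : pt) (i : nat) : (i <= n)%nat -> x i * x i <= dot n x x.
Proof.
  unfold dot. induction n as [|m IH]; intros Hi; simpl.
  - replace i with 0%nat by lia. lra.
  - destruct (Nat.eq_dec i (S m)) as [->|Hne].
    + pose proof (cond_pos_sum (fun j => x j * x j) m (fun j => Rle_0_sqr (x j))). lra.
    + pose proof (IH ltac:(lia)). pose proof (Rle_0_sqr (x (S m))). unfold Rsqr in *. lra.
Qed.

Lemma dot_self_eq0_coord (x : pt) : dot n x x = 0 -> forall i, (i <= n)%nat -> x i = 0.
Proof.
  intros H i Hi. pose proof (coord_sqr_le_dot_self x i Hi). pose proof (Rle_0_sqr (x i)).
  unfold Rsqr in *. nra.
Qed.

Lemma dot_self_eq0_l (x y : pt) : dot n x x = 0 -> dot n x y = 0.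
Proof.
  intros H. unfold dot. rewrite (sum_eq _ (fun _ => 0)).
  - clear H. induction n as [|m IH]; simpl; [|rewrite IH]; ring.
  - intros i Hi. rewrite (dot_self_eq0_coord x H i Hi). ring.
Qed.

Lemma vanish_above_ext (x y : pt) : vanish_above x -> vanish_above y ->
  (forall i, (i <= n)%nat -> x i = y i) -> x = y.
Proof.
  intros Hx Hy H. apply functional_extensionality; intro i.
  destruct (Compare_dec.le_lt_dec i n); [auto|]. rewrite Hx, Hy; auto.
Qed.

Lemma dot_self_eq0_vzero (x : pt) : vanish_above x -> dot n x x = 0 -> x = vzero.
Proof.
  intros Hx H. apply vanish_above_ext; [assumption | intros i _; reflexivity |].
  exact (dot_self_eq0_coord x H).
Qed.

Lemma vanish_above_vcomb (a b : R) (x y : pt) :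
  vanish_above x -> vanish_above y -> vanish_above (vcomb a x b y).
Proof. intros H H' i Hi. unfold vcomb. rewrite H, H' by assumption. ring. Qed.

Lemma vanish_above_vscale (a : R) (x : pt) : vanish_above x -> vanish_above (vscale a x).
Proof. intros H i Hi. unfold vscale. rewrite H by assumption. ring. Qed.

Lemma vanish_above_vsub (x y : pt) : vanish_above x -> vanish_above y -> vanish_above (vsub x y).
Proof. rewrite vsub_vcomb. apply vanish_above_vcomb. Qed.

Lemma vanish_above_vopp (x : pt) : vanish_above x -> vanish_above (vopp x).
Proof. intros H i Hi. unfold vopp. rewrite H by assumption. ring. Qed.

Lemma cauchy_schwarz (x y : pt) : Rsqr (dot n x y) <= dot n x x * dot n y y.
Proof.
  destruct (Req_dec (dot n y y) 0) as [Hy | Hy].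
  - rewrite dot_comm, (dot_self_eq0_l y x Hy), Hy. unfold Rsqr. lra.
  - pose proof (dot_self_ge0 y) as Hy0.
    set (t := dot n x y / dot n y y).
    pose proof (dot_self_ge0 (vcomb 1 x (- t) y)) as H.
    rewrite dot_vcomb_l, !dot_vcomb_r, (dot_comm y x) in H.
    replace (1 * (1 * dot n x x + - t * dot n x y) + - t * (1 * dot n x y + - t * dot n y y))
      with (dot n x x - Rsqr (dot n x y) / dot n y y) in H
      by (unfold t, Rsqr; field; assumption).
    apply Rmult_le_reg_r with (/ dot n y y); [apply Rinv_0_lt_compat; lra|].
    replace (dot n x x * dot n y y * / dot n y y) with (dot n x x) by (field; assumption).
    unfold Rdiv in H. lra.
Qed.

Lemma vnorm_sqr (x : pt) : Rsqr (vnorm n x) = dot n x x.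
Proof. apply Rsqr_sqrt, dot_self_ge0. Qed.

Lemma vnorm_pos (v : pt) : dot n v v <> 0 -> 0 < vnorm n v.
Proof. intros H. apply sqrt_lt_R0. pose proof (dot_self_ge0 v). lra. Qed.

Lemma Rabs_dot_le (x y : pt) : Rabs (dot n x y) <= vnorm n x * vnorm n y.
Proof.
  unfold vnorm. rewrite <- sqrt_mult by apply dot_self_ge0.
  rewrite <- sqrt_Rsqr_abs. apply sqrt_le_1_alt, cauchy_schwarz.
Qed.

Lemma vnorm_vcomb_le (x y : pt) : vnorm n (vcomb 1 x 1 y) <= vnorm n x + vnorm n y.
Proof.
  pose proof (sqrt_pos (dot n x x)). pose proof (sqrt_pos (dot n y y)).
  apply Rsqr_incr_0_var; [|unfold vnorm; lra].
  rewrite vnorm_sqr, dot_vcomb_l, !dot_vcomb_r, Rsqr_plus, !vnorm_sqr, (dot_comm y x).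
  pose proof (Rabs_dot_le x y). pose proof (Rle_abs (dot n x y)). lra.
Qed.

Lemma vnorm_vscale (a : R) (x : pt) : vnorm n (vscale a x) = Rabs a * vnorm n x.
Proof.
  unfold vnorm. rewrite dot_vscale_l, dot_vscale_r, <- Rmult_assoc.
  rewrite sqrt_mult by (apply Rle_0_sqr || apply dot_self_ge0).
  rewrite <- sqrt_Rsqr_abs. reflexivity.
Qed.

Lemma vnorm_triangle_sub (v u : pt) : vnorm n v <= vnorm n (vsub v u) + vnorm n u.
Proof.
  replace v with (vcomb 1 (vsub v u) 1 u) at 1
    by (apply functional_extensionality; intro; unfold vcomb, vsub; ring).
  apply vnorm_vcomb_le.
Qed.

Lemma vnorm_vsub_comm (x y : pt) : vnorm n (vsub x y) = vnorm n (vsub y x).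
Proof. unfold vnorm. rewrite !dot_vsub_l, !dot_vsub_r, (dot_comm x y). f_equal. ring. Qed.

Lemma Rabs_dot_vsub_le (x y w : pt) :
  Rabs (dot n x w - dot n y w) <= vnorm n (vsub x y) * vnorm n w.
Proof. rewrite <- dot_vsub_l. apply Rabs_dot_le. Qed.

Lemma normalize_sphere (v : pt) : vanish_above v -> dot n v v <> 0 -> sphere n (normalize v).
Proof.
  intros Hv H. split; [|apply vanish_above_vscale; assumption].
  unfold normalize. rewrite dot_vscale_l, dot_vscale_r, <- vnorm_sqr.
  pose proof (vnorm_pos v H). unfold Rsqr. field. lra.
Qed.

Lemma normalize_vscale (b : R) (v : pt) : 0 < b -> dot n v v <> 0 ->
  normalize (vscale b v) = normalize v.
Proof.
  intros Hb H. unfold normalize. rewrite vnorm_vscale, Rabs_pos_eq by lra.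
  pose proof (vnorm_pos v H). apply functional_extensionality; intro i. unfold vscale. field. lra.
Qed.

Lemma vscale_vnorm_normalize (v : pt) : dot n v v <> 0 -> v = vscale (vnorm n v) (normalize v).
Proof.
  intros H. pose proof (vnorm_pos v H). apply functional_extensionality; intro i.
  unfold normalize, vscale. field. lra.
Qed.

Lemma normalize_sphere_id (k : pt) : sphere n k -> normalize k = k.
Proof.
  intros [H _]. unfold normalize, vnorm. rewrite H, sqrt_1, Rinv_1.
  apply functional_extensionality; intro; unfold vscale; ring.
Qed.

Lemma dot_normalize_r (x v : pt) : dot n x (normalize v) = dot n x v / vnorm n v.
Proof. unfold normalize. rewrite dot_vscale_r. unfold Rdiv. ring. Qed.

Lemma sphere_vopp (x : pt) : sphere n x -> sphere n (vopp x).
Proof.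
  intros [H1 H2]. split; [rewrite dot_vopp_l, dot_vopp_r; lra | exact (vanish_above_vopp x H2)].
Qed.

Lemma sphere_vnorm (x : pt) : sphere n x -> vnorm n x = 1.
Proof. intros [H _]. unfold vnorm. rewrite H. apply sqrt_1. Qed.

Lemma sphere_dot_bound (x y : pt) : sphere n x -> sphere n y -> -1 <= dot n x y <= 1.
Proof.
  intros Hx Hy. pose proof (Rabs_dot_le x y).
  rewrite (sphere_vnorm x Hx), (sphere_vnorm y Hy) in H. apply Rabs_le_bounds. lra.
Qed.

Lemma sphere_coord_bound (x : pt) (i : nat) : sphere n x -> -1 <= x i <= 1.
Proof.
  intros [H Hv]. destruct (Compare_dec.le_lt_dec i n) as [Hi | Hi].
  - pose proof (coord_sqr_le_dot_self x i Hi). rewrite H in H0. nra.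
  - rewrite Hv by assumption. lra.
Qed.

Lemma sqdist_sphere (x y : pt) : sphere n x -> sphere n y -> sqdist x y = 2 - 2 * dot n x y.
Proof.
  intros [Hx _] [Hy _]. unfold sqdist. rewrite !dot_vsub_l, !dot_vsub_r, (dot_comm y x). lra.
Qed.

Lemma sdist_bound (x y : pt) : 0 <= sdist n x y <= PI.
Proof. apply acos_bound. Qed.

Lemma sdist_comm (x y : pt) : sdist n x y = sdist n y x.
Proof. unfold sdist. rewrite dot_comm. reflexivity. Qed.

Lemma sdist_refl (x : pt) : sphere n x -> sdist n x x = 0.
Proof. intros [H _]. unfold sdist. rewrite H. apply acos_1. Qed.

Lemma sdist_lt_acos (x y : pt) (c : R) : sphere n x -> sphere n y -> -1 <= c <= 1 ->
  c < dot n x y -> sdist n x y < acos c.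
Proof. intros. apply acos_lt_compat; [assumption | apply sphere_dot_bound | ]; assumption. Qed.

Lemma dot_nonneg_sdist_le (x y : pt) : sphere n x -> sphere n y -> 0 <= dot n x y ->
  sdist n x y <= PI / 2.
Proof.
  intros. rewrite <- acos_0. apply acos_le_compat; [lra | apply sphere_dot_bound | ]; assumption.
Qed.

Lemma sdist_triangle (x y z : pt) : sphere n x -> sphere n y -> sphere n z ->
  sdist n x z <= sdist n x y + sdist n y z.
Proof.
  intros Hx Hy Hz. unfold sdist.
  set (a := dot n x y). set (b := dot n y z). set (c := dot n x z).
  pose proof (sphere_dot_bound x y Hx Hy) as Ha.
  pose proof (sphere_dot_bound y z Hy Hz) as Hb.
  pose proof (sphere_dot_bound x z Hx Hz) as Hc.
  pose proof (acos_bound a). pose proof (acos_bound b). pose proof (acos_bound c).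
  destruct (Rle_lt_dec PI (acos a + acos b)); [lra|].
  (* the components of x and z orthogonal to y have inner product c - ab *)
  assert (Hcos : cos (acos a + acos b) <= c).
  { rewrite cos_plus, !cos_acos, !sin_acos by assumption.
    set (u := vcomb 1 x (- a) y). set (v := vcomb 1 z (- b) y).
    destruct Hx as [Hx _], Hy as [Hy _], Hz as [Hz _].
    assert (Euv : dot n u v = c - a * b).
    { unfold u, v. rewrite dot_vcomb_l, !dot_vcomb_r, (dot_comm y z), (dot_comm z y), Hy.
      fold a b c. ring. }
    assert (Eu : vnorm n u = sqrt (1 - a²)).
    { unfold vnorm, u. rewrite dot_vcomb_l, !dot_vcomb_r, (dot_comm y x), Hx, Hy.
      fold a. f_equal. unfold Rsqr. ring. }
    assert (Ev : vnorm n v = sqrt (1 - b²)).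
    { unfold vnorm, v. rewrite dot_vcomb_l, !dot_vcomb_r, (dot_comm z y), Hz, Hy.
      fold b. f_equal. unfold Rsqr. ring. }
    pose proof (Rabs_dot_le u v) as Huv. rewrite Euv, Eu, Ev in Huv.
    apply Rabs_le_bounds in Huv. lra. }
  pose proof (COS_bound (acos a + acos b)) as Hbound.
  rewrite <- (acos_cos (acos a + acos b)) by lra.
  apply acos_le_compat; assumption.
Qed.

Lemma sdist_small_vnorm_small (m : R) : 0 < m -> exists eps, 0 < eps /\
  forall x y, sphere n x -> sphere n y -> sdist n x y < eps -> vnorm n (vsub x y) < m.
Proof.
  intros Hm. set (r := Rmin (Rsqr m / 4) 1).
  assert (Hr : 0 < r) by (apply Rmin_glb_lt; [unfold Rsqr; nra | lra]).
  assert (Hr1 : r <= 1) by apply Rmin_r. assert (Hr2 : r <= Rsqr m / 4) by apply Rmin_l.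
  exists (acos (1 - r)). split.
  - rewrite <- acos_1. apply acos_lt_compat; lra.
  - intros x y Hx Hy Hd. pose proof (sphere_dot_bound x y Hx Hy).
    apply acos_lt_inv in Hd; [| lra | assumption].
    unfold vnorm. fold (sqdist x y). rewrite sqdist_sphere by assumption.
    rewrite <- (sqrt_Rsqr m) by lra. apply sqrt_lt_1; [lra | apply Rle_0_sqr |].
    unfold Rsqr in *. nra.
Qed.

Lemma vnorm_small_sdist_small (eps : R) : 0 < eps -> exists r, 0 < r /\
  forall x y, sphere n x -> sphere n y -> vnorm n (vsub x y) < r -> sdist n x y < eps.
Proof.
  intros He. destruct (acos_small eps He) as [c [Hc1 Hc2]].
  exists (sqrt (2 - 2 * c)). split; [apply sqrt_lt_R0; lra|].
  intros x y Hx Hy H. apply sqrt_lt_0_alt in H. fold (sqdist x y) in H.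
  rewrite sqdist_sphere in H by assumption.
  apply Rlt_le_trans with (acos c); [apply sdist_lt_acos; try assumption; lra | assumption].
Qed.

End Vectors.

(** * Distance to a set and Hausdorff excess *)

Section Hausdorff.

Variable n : nat.

Definition nonempty (A : pset) : Prop := exists x, A x.

Lemma dist_pt_set_le (x y : pt) (B : pset) : B y -> dist_pt_set n x B <= sdist n x y.
Proof.
  intros Hy. apply Rinf_lower with 0; [|exists y; split; auto].
  intros r [z [_ ->]]. apply sdist_bound.
Qed.

Lemma dist_pt_set_ge (x : pt) (B : pset) (m : R) :
  nonempty B -> (forall y, B y -> m <= sdist n x y) -> m <= dist_pt_set n x B.
Proof.
  intros [y Hy] H. apply Rinf_greatest; [exists (sdist n x y), y; auto|].
  intros r [z [Hz ->]]. auto.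
Qed.

Lemma dist_pt_set_ge0 (x : pt) (B : pset) : nonempty B -> 0 <= dist_pt_set n x B.
Proof. intros HB. apply dist_pt_set_ge; [assumption|]. intros; apply sdist_bound. Qed.

Lemma dist_pt_set_approx (x : pt) (B : pset) (eps : R) : nonempty B -> 0 < eps ->
  exists y, B y /\ sdist n x y < dist_pt_set n x B + eps.
Proof.
  intros [y0 Hy0] He.
  destruct (Rinf_approx (fun r => exists y, B y /\ r = sdist n x y) 0 eps)
    as [r [[y [Hy ->]] Hr]]; eauto.
  intros r [z [_ ->]]. apply sdist_bound.
Qed.

Lemma hexcess_ge (A B : pset) (x : pt) : nonempty B -> A x -> dist_pt_set n x B <= hexcess n A B.
Proof.
  intros [y Hy] Hx. apply Rsup_upper; [|eauto].
  exists PI. intros r [z [_ ->]].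
  apply Rle_trans with (sdist n z y); [apply dist_pt_set_le; assumption | apply sdist_bound].
Qed.

Lemma hexcess_le (A B : pset) (m : R) :
  nonempty A -> (forall x, A x -> dist_pt_set n x B <= m) -> hexcess n A B <= m.
Proof.
  intros [x Hx] H. apply Rsup_least; [eauto|]. intros r [z [Hz ->]]. auto.
Qed.

Lemma hexcess_ge0 (A B : pset) : nonempty A -> nonempty B -> 0 <= hexcess n A B.
Proof.
  intros [x Hx] HB. apply Rle_trans with (dist_pt_set n x B).
  - apply dist_pt_set_ge0; assumption.
  - apply hexcess_ge; assumption.
Qed.

Lemma hexcess_lt_near (A B : pset) (x : pt) (d : R) :
  nonempty B -> A x -> hexcess n A B < d -> exists y, B y /\ sdist n x y < d.
Proof.
  intros HB Hx Hd. pose proof (hexcess_ge A B x HB Hx).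
  destruct (dist_pt_set_approx x B (d - dist_pt_set n x B) HB) as [y [Hy Hxy]]; [lra|].
  exists y. split; [assumption | lra].
Qed.

Lemma hdist_lt_near_l (A B : pset) (x : pt) (d : R) :
  nonempty B -> A x -> hdist n A B < d -> exists y, B y /\ sdist n x y < d.
Proof.
  intros HB Hx Hd. apply (hexcess_lt_near A); [assumption.. |].
  pose proof (Rmax_l (hexcess n A B) (hexcess n B A)). unfold hdist in Hd. lra.
Qed.

Lemma hdist_lt_near_r (A B : pset) (y : pt) (d : R) :
  nonempty A -> B y -> hdist n A B < d -> exists x, A x /\ sdist n y x < d.
Proof.
  intros HA Hy Hd. apply (hexcess_lt_near B); [assumption.. |].
  pose proof (Rmax_r (hexcess n A B) (hexcess n B A)). unfold hdist in Hd. lra.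
Qed.

End Hausdorff.

(** * Nearest points in cones *)

Section Cones.

Variable n : nat.

Definition converges_to (u : nat -> pt) (p : pt) : Prop :=
  forall i, (i <= n)%nat -> Un_cv (fun m => u m i) (p i).

Lemma Un_cv_dot (u v : nat -> pt) (p q : pt) : converges_to u p -> converges_to v q ->
  Un_cv (fun m => dot n (u m) (v m)) (dot n p q).
Proof.
  unfold converges_to, dot. induction n as [|k IH]; intros Hu Hv; simpl.
  - apply CV_mult; auto.
  - apply CV_plus; [apply IH; intros; [apply Hu | apply Hv]; lia | apply CV_mult; auto].
Qed.

Lemma converges_to_vnorm_vsub (u : nat -> pt) (p : pt) (eps : R) :
  converges_to u p -> 0 < eps -> exists N, forall m, (m >= N)%nat -> vnorm n (vsub (u m) p) < eps.
Proof.
  intros Hu He.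
  assert (Hcv : Un_cv (fun m => dot n (vsub (u m) p) (vsub (u m) p)) (dot n (vsub p p) (vsub p p))).
  { apply Un_cv_dot; intros i Hi; apply CV_minus; auto using Un_cv_const. }
  replace (dot n (vsub p p) (vsub p p)) with 0 in Hcv
    by (symmetry; apply dot_self_eq0_l; rewrite dot_vsub_l, !dot_vsub_r; ring).
  destruct (Un_cv_eventually_lt _ _ (Rsqr eps) Hcv) as [N HN]; [unfold Rsqr; nra|].
  exists N. intros m Hm. rewrite <- (sqrt_Rsqr eps) by lra.
  apply sqrt_lt_1; [apply dot_self_ge0 | apply Rle_0_sqr | exact (HN m Hm)].
Qed.

Lemma vnorm_normalize_sub_le (v u : pt) : dot n v v <> 0 -> dot n u u <> 0 ->
  vnorm n (vsub (normalize n v) (normalize n u)) <= 2 * vnorm n (vsub v u) / vnorm n v.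
Proof.
  intros Hv Hu. set (A := vnorm n v). set (B := vnorm n u).
  assert (HA : 0 < A) by (apply vnorm_pos; assumption).
  assert (HB : 0 < B) by (apply vnorm_pos; assumption).
  replace (vsub (normalize n v) (normalize n u))
    with (vcomb 1 (vscale (/ A) (vsub v u)) 1 (vscale (/ A - / B) u))
    by (apply functional_extensionality; intro;
        unfold normalize, vsub, vcomb, vscale; fold A B; ring).
  eapply Rle_trans; [apply vnorm_vcomb_le|]. rewrite !vnorm_vscale. fold B.
  rewrite Rabs_pos_eq by (left; apply Rinv_0_lt_compat; assumption).
  pose proof (vnorm_triangle_sub n v u). pose proof (vnorm_triangle_sub n u v).
  rewrite (vnorm_vsub_comm n u v) in H0. fold A B in H, H0.
  replace (Rabs (/ A - / B) * B) with (Rabs (B - A) / A).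
  - assert (Rabs (B - A) <= vnorm n (vsub v u)) by (apply Rabs_le; lra).
    unfold Rdiv. apply Rmult_le_reg_r with A; [assumption|].
    field_simplify; lra.
  - replace (/ A - / B) with ((B - A) * / (A * B)) by (field; lra).
    rewrite Rabs_mult, (Rabs_pos_eq (/ (A * B))) by (left; apply Rinv_0_lt_compat; nra).
    field; lra.
Qed.

Definition cone_convex (K : pset) : Prop :=
  forall k1 k2 a b, K k1 -> K k2 -> 0 <= a -> 0 <= b ->
    dot n (vcomb a k1 b k2) (vcomb a k1 b k2) <> 0 -> K (normalize n (vcomb a k1 b k2)).

(* The cone over K is {0} together with all positive multiples of points of K. *)
Definition in_cone (K : pset) (c : pt) : Prop :=
  vanish_above n c /\ (dot n c c = 0 \/ K (normalize n c)).

Lemma in_cone_vzero (K : pset) : in_cone K vzero.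
Proof. split; [intros i _; reflexivity | left; apply dot_vzero_l]. Qed.

Lemma in_cone_sphere (K : pset) (k : pt) : sphere n k -> K k -> in_cone K k.
Proof. intros Hs Hk. split; [exact (proj2 Hs)|]. right. rewrite normalize_sphere_id; assumption. Qed.

Lemma in_cone_vscale (K : pset) (c : pt) (b : R) : in_cone K c -> 0 <= b -> in_cone K (vscale b c).
Proof.
  intros [Hc Hc'] Hb. split; [apply vanish_above_vscale; assumption|].
  rewrite dot_vscale_l, dot_vscale_r.
  destruct (Req_dec (b * (b * dot n c c)) 0) as [E | E]; [left; assumption | right].
  assert (b <> 0) by (intro; subst; apply E; ring).
  assert (dot n c c <> 0) by (intro X; apply E; rewrite X; ring).
  rewrite normalize_vscale by lra. destruct Hc'; tauto.
Qed.

Lemma in_cone_vcomb (K : pset) (c1 c2 : pt) (a b : R) : cone_convex K ->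
  in_cone K c1 -> in_cone K c2 -> 0 <= a -> 0 <= b -> in_cone K (vcomb a c1 b c2).
Proof.
  intros HK H1 H2 Ha Hb.
  destruct (Req_dec (dot n c1 c1) 0) as [Z1 | N1].
  { apply dot_self_eq0_vzero in Z1; [subst c1 | apply H1].
    replace (vcomb a vzero b c2) with (vscale b c2)
      by (apply functional_extensionality; intro; unfold vcomb, vscale, vzero; ring).
    apply in_cone_vscale; assumption. }
  destruct (Req_dec (dot n c2 c2) 0) as [Z2 | N2].
  { apply dot_self_eq0_vzero in Z2; [subst c2 | apply H2].
    replace (vcomb a c1 b vzero) with (vscale a c1)
      by (apply functional_extensionality; intro; unfold vcomb, vscale, vzero; ring).
    apply in_cone_vscale; assumption. }
  destruct H1 as [T1 [? | K1]]; [contradiction|].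
  destruct H2 as [T2 [? | K2]]; [contradiction|].
  split; [apply vanish_above_vcomb; assumption|].
  destruct (Req_dec (dot n (vcomb a c1 b c2) (vcomb a c1 b c2)) 0) as [E | E]; [left; exact E | right].
  pose proof (vnorm_pos n c1 N1). pose proof (vnorm_pos n c2 N2).
  replace (vcomb a c1 b c2)
    with (vcomb (a * vnorm n c1) (normalize n c1) (b * vnorm n c2) (normalize n c2)) in *.
  - apply HK; auto; apply Rmult_le_pos; lra.
  - rewrite (vscale_vnorm_normalize n c1 N1) at 3. rewrite (vscale_vnorm_normalize n c2 N2) at 3.
    apply functional_extensionality; intro; unfold vcomb, vscale; ring.
Qed.

Lemma normalize_sdist_small (v : pt) (eps : R) : vanish_above n v -> dot n v v <> 0 -> 0 < eps ->
  exists delta, 0 < delta /\ forall u, vanish_above n u -> vnorm n (vsub u v) < delta ->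
    dot n u u <> 0 /\ sdist n (normalize n v) (normalize n u) < eps.
Proof.
  intros Hv NZ He. destruct (vnorm_small_sdist_small n eps He) as [r [Hr Hsd]].
  set (A := vnorm n v). assert (HA : 0 < A) by (apply vnorm_pos; assumption).
  exists (Rmin (r * A / 2) (A / 2)). split; [apply Rmin_glb_lt; nra|].
  intros u Hu Huv.
  pose proof (Rmin_l (r * A / 2) (A / 2)). pose proof (Rmin_r (r * A / 2) (A / 2)).
  assert (Nu : dot n u u <> 0).
  { intros Z. pose proof (vnorm_triangle_sub n v u) as Htri.
    rewrite vnorm_vsub_comm in Htri. unfold vnorm at 3 in Htri.
    rewrite Z, sqrt_0 in Htri. fold A in Htri. lra. }
  split; [assumption|].
  apply Hsd; [apply normalize_sphere; assumption .. |].
  eapply Rle_lt_trans; [apply vnorm_normalize_sub_le; assumption|].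
  rewrite vnorm_vsub_comm. fold A. apply Rmult_lt_reg_r with A; [assumption|].
  unfold Rdiv. rewrite Rmult_assoc, Rinv_l by lra. lra.
Qed.

Lemma in_cone_closed (K : pset) (p : pt) : sclosed n K -> vanish_above n p ->
  (forall eps, 0 < eps -> exists c, in_cone K c /\ vnorm n (vsub c p) < eps) -> in_cone K p.
Proof.
  intros HK Hp Happ. split; [assumption|].
  destruct (Req_dec (dot n p p) 0) as [Z | NZ]; [left; exact Z | right].
  apply (proj2 HK); [apply normalize_sphere; assumption|].
  intros eps He. destruct (normalize_sdist_small p eps Hp NZ He) as [delta [Hd Hclose]].
  destruct (Happ delta Hd) as [c [[Tc Hc] Hcp]].
  destruct (Hclose c Tc Hcp) as [Nc Hpc].
  destruct Hc as [Zc | Kc]; [contradiction|].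
  exists (normalize n c). split; assumption.
Qed.

Lemma sqdist_parallelogram (x c1 c2 : pt) :
  sqdist n c1 c2 = 2 * sqdist n x c1 + 2 * sqdist n x c2 - 4 * sqdist n x (vcomb (/2) c1 (/2) c2).
Proof.
  unfold sqdist. rewrite !dot_vsub_l, !dot_vsub_r, !dot_vcomb_l, !dot_vcomb_r.
  rewrite (dot_comm n c1 x), (dot_comm n c2 x), (dot_comm n c2 c1). field.
Qed.

Lemma sqdist_cauchy_converges (u : nat -> pt) :
  (forall m, vanish_above n (u m)) ->
  (forall eps, 0 < eps -> exists N, forall m l, (m >= N)%nat -> (l >= N)%nat -> sqdist n (u m) (u l) < eps) ->
  exists p, vanish_above n p /\ converges_to u p.
Proof.
  intros Hu Hc.
  assert (Hcoord : forall i, Cauchy_crit (fun m => u m i)).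
  { intros i eps He. destruct (Compare_dec.le_lt_dec i n) as [Hi | Hi].
    - destruct (Hc (Rsqr eps)) as [N HN]; [unfold Rsqr; nra|].
      exists N. intros m l Hm Hl. unfold Rdist.
      pose proof (coord_sqr_le_dot_self n (vsub (u m) (u l)) i Hi). specialize (HN m l Hm Hl).
      rewrite <- (Rabs_pos_eq eps) by lra. apply Rsqr_lt_abs_0.
      unfold sqdist, vsub, Rsqr in *. lra.
    - exists 0%nat. intros m l _ _. unfold Rdist.
      rewrite (Hu m i Hi), (Hu l i Hi), Rminus_diag, Rabs_R0. assumption. }
  exists (fun i => proj1_sig (R_complete _ (Hcoord i))).
  assert (Hlim : forall i, Un_cv (fun m => u m i) (proj1_sig (R_complete _ (Hcoord i))))
    by (intros i; destruct R_complete; assumption).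
  split; [|intros i _; apply Hlim].
  intros i Hi. apply UL_sequence with (fun m => u m i); [apply Hlim|].
  eapply Un_cv_ext; [| apply (Un_cv_const 0)]. intros m; simpl. rewrite (Hu m i Hi). reflexivity.
Qed.

Lemma in_cone_nearest_point (K : pset) (x : pt) : sclosed n K -> cone_convex K -> vanish_above n x ->
  exists p, in_cone K p /\ forall c, in_cone K c -> sqdist n x p <= sqdist n x c.
Proof.
  intros HK Hconv Hx.
  set (E := fun r => exists c, in_cone K c /\ r = sqdist n x c).
  set (delta := Rinf E).
  assert (HE0 : forall r, E r -> 0 <= r) by (intros r [c [_ ->]]; apply dot_self_ge0).
  assert (Hdelta : forall c, in_cone K c -> delta <= sqdist n x c)
    by (intros c Hc; apply Rinf_lower with 0; [|exists c]; auto).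
  assert (Hseq : forall m : nat, exists c, in_cone K c /\ sqdist n x c < delta + / INR (S m)).
  { intros m. destruct (Rinf_approx E 0 (/ INR (S m)) HE0) as [r [[c [Hc ->]] Hr]].
    - exists (sqdist n x vzero), vzero. split; [apply in_cone_vzero | reflexivity].
    - apply inv_INR_S_pos.
    - exists c. split; assumption. }
  set (cs := fun m => proj1_sig (constructive_indefinite_description _ (Hseq m))).
  assert (Hcs : forall m, in_cone K (cs m) /\ sqdist n x (cs m) < delta + / INR (S m))
    by (intros m; unfold cs; destruct constructive_indefinite_description; assumption).
  (* the midpoint of two near-minimizers lies in the cone, so the parallelogram law bounds their distance *)
  assert (Hcauchy : forall m l, sqdist n (cs m) (cs l) <= 2 * / INR (S m) + 2 * / INR (S l)).
  { intros m l. rewrite (sqdist_parallelogram x).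
    assert (Hhalf : 0 <= / 2) by lra.
    pose proof (Hdelta _ (in_cone_vcomb K _ _ _ _ Hconv (proj1 (Hcs m)) (proj1 (Hcs l)) Hhalf Hhalf)).
    pose proof (proj2 (Hcs m)). pose proof (proj2 (Hcs l)). lra. }
  destruct (sqdist_cauchy_converges cs) as [p [Hp Hcv]].
  { intros m. apply Hcs. }
  { intros eps He. destruct (archimed_cor1 (eps / 4)) as [N [HN HN']]; [lra|].
    exists N. intros m l Hm Hl. specialize (Hcauchy m l).
    pose proof (inv_INR_S_le m N Hm HN'). pose proof (inv_INR_S_le l N Hl HN'). lra. }
  exists p. split.
  - apply in_cone_closed; [assumption .. |]. intros eps He.
    destruct (converges_to_vnorm_vsub cs p eps Hcv He) as [N HN].
    exists (cs N). split; [apply Hcs | apply HN; lia].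
  - intros c Hc. apply Rle_trans with delta; [|apply Hdelta; assumption].
    apply (Un_cv_le_of_le_inv (fun m => sqdist n x (cs m))).
    + apply Un_cv_dot; intros i Hi; apply CV_minus; auto using Un_cv_const.
    + intros m. pose proof (proj2 (Hcs m)). lra.
Qed.

Lemma nearest_point_variational (K : pset) (x p : pt) : cone_convex K -> in_cone K p ->
  (forall c, in_cone K c -> sqdist n x p <= sqdist n x c) ->
  forall c, in_cone K c -> dot n (vsub x p) (vsub c p) <= 0.
Proof.
  intros Hconv Hp Hmin c Hc.
  set (A := dot n (vsub x p) (vsub c p)). set (B := sqdist n c p).
  assert (HB : 0 <= B) by apply dot_self_ge0.
  (* first variation along the segment from p to c *)
  assert (Ht : forall t, 0 < t <= 1 -> 2 * A <= t * B).
  { intros t Ht.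
    pose proof (Hmin _ (in_cone_vcomb K p c (1 - t) t Hconv Hp Hc ltac:(lra) ltac:(lra))) as Hm.
    assert (Hexp : sqdist n x (vcomb (1 - t) p t c) = sqdist n x p - 2 * t * A + t * t * B).
    { unfold A, B, sqdist. rewrite !dot_vsub_l, !dot_vsub_r, !dot_vcomb_l, !dot_vcomb_r.
      rewrite (dot_comm n p x), (dot_comm n c x), (dot_comm n c p). ring. }
    rewrite Hexp in Hm. nra. }
  destruct (Rle_lt_dec A 0) as [|HA]; [assumption|]. exfalso.
  set (t := Rmin 1 (A / (B + 1))).
  assert (Hpos : 0 < A / (B + 1)) by (apply Rdiv_lt_0_compat; lra).
  assert (Htt : 0 < t <= 1) by (split; [apply Rmin_glb_lt; lra | apply Rmin_l]).
  specialize (Ht t Htt). assert (t <= A / (B + 1)) by apply Rmin_r.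
  assert (t * B <= A / (B + 1) * B) by (apply Rmult_le_compat_r; assumption).
  assert (A / (B + 1) * B < A).
  { replace (A / (B + 1) * B) with (A - A / (B + 1)) by (field; lra). lra. }
  lra.
Qed.

Lemma cone_projection (K : pset) (x : pt) : sclosed n K -> cone_convex K -> vanish_above n x ->
  exists p, in_cone K p /\ (forall c, in_cone K c -> dot n (vsub x p) c <= 0) /\ dot n (vsub x p) p = 0.
Proof.
  intros HK Hconv Hx.
  destruct (in_cone_nearest_point K x HK Hconv Hx) as [p [Hp Hmin]].
  pose proof (nearest_point_variational K x p Hconv Hp Hmin) as Hvar.
  (* test the variational inequality with c = 2p and c = 0 *)
  pose proof (Hvar _ (in_cone_vscale K p 2 Hp ltac:(lra))) as V1.
  pose proof (Hvar _ (in_cone_vzero K)) as V2.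
  rewrite !dot_vsub_r, dot_vscale_r in V1. rewrite dot_vsub_r, dot_comm, dot_vzero_l in V2.
  assert (Horth : dot n (vsub x p) p = 0) by lra.
  exists p. split; [assumption | split; [|assumption]].
  intros c Hc. specialize (Hvar c Hc). rewrite dot_vsub_r in Hvar. lra.
Qed.

End Cones.

(** * Polar sets *)

Lemma acos_opp_sqrt (a : R) : 0 <= a <= 1 -> acos (- sqrt (1 - a²)) = PI / 2 + acos a.
Proof.
  intros Ha. pose proof (acos_bound a).
  assert (Hac : acos a <= PI / 2) by (rewrite <- acos_0; apply acos_le_compat; lra).
  rewrite <- sin_acos by lra. pose proof (SIN_bound (acos a)).
  rewrite acos_opp, acos_asin, asin_sin by lra. lra.
Qed.

Section Polar.

Variable n : nat.

Definition admissible (P : pt) (K : pset) : Prop :=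
  sclosed n K /\ K P /\ (forall x, K x -> 0 <= dot n P x) /\ cone_convex n K.

Lemma polar_sphere (W : pset) (x : pt) : polar n W x -> sphere n x.
Proof. intros [H _]; exact H. Qed.

Lemma polar_sclosed (W : pset) : (forall w, W w -> sphere n w) -> sclosed n (polar n W).
Proof.
  intros HW. split; [apply polar_sphere|].
  intros x Hx Happ. split; [assumption|]. intros w Hw.
  destruct (Rle_lt_dec 0 (dot n w x)) as [|Hneg]; [assumption|]. exfalso.
  destruct (sdist_small_vnorm_small n (- dot n w x)) as [eps [He Hclose]]; [lra|].
  destruct (Happ eps He) as [y [[Hy Hwy] Hxy]].
  pose proof (Hclose x y Hx Hy Hxy). pose proof (Hwy w Hw).
  pose proof (Rabs_dot_vsub_le n x y w) as Hdiff.
  rewrite (sphere_vnorm n w (HW w Hw)), (dot_comm n x w), (dot_comm n y w) in Hdiff.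
  apply Rabs_le_bounds in Hdiff. lra.
Qed.

Lemma polar_cone_convex (W : pset) : cone_convex n (polar n W).
Proof.
  intros k1 k2 a b [S1 H1] [S2 H2] Ha Hb Hv. split.
  - apply normalize_sphere; [apply vanish_above_vcomb; [exact (proj2 S1) | exact (proj2 S2)] | assumption].
  - intros w Hw. rewrite dot_normalize_r, dot_vcomb_r.
    pose proof (vnorm_pos n _ Hv). pose proof (H1 w Hw). pose proof (H2 w Hw).
    apply Rdiv_le_0_compat; [nra | assumption].
Qed.

Lemma polar_admissible (P : pt) (K : pset) : admissible P K -> admissible P (polar n K).
Proof.
  intros (HK & HKP & HKh & HKv). split; [|split; [|split]].
  - apply polar_sclosed, HK.
  - split; [exact (proj1 HK P HKP)|]. intros w Hw. rewrite dot_comm. auto.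
  - intros x [_ Hx]. auto.
  - apply polar_cone_convex.
Qed.

(* Since x.p = |p|^2 and |x| = 1, the point z = (p - x)/|p - x| satisfies x.z = -sqrt(1 - |p|^2). *)
Lemma projection_polar_point (K : pset) (x p : pt) : sclosed n K -> sphere n x -> ~ K x ->
  in_cone n K p -> (forall c, in_cone n K c -> dot n (vsub x p) c <= 0) -> dot n (vsub x p) p = 0 ->
  vnorm n p < 1 /\ polar n K (normalize n (vsub p x)) /\ dot n x (normalize n (vsub p x)) < 0 /\
  sdist n x (normalize n (vsub p x)) = PI / 2 + acos (vnorm n p).
Proof.
  intros HK Hx Hnx Hp Hsep Horth.
  assert (Hxp : dot n x p = dot n p p) by (rewrite dot_vsub_l in Horth; lra).
  set (d := vsub p x).
  assert (Hdd : dot n d d = 1 - dot n p p).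
  { unfold d. rewrite dot_vsub_l, !dot_vsub_r, (dot_comm n p x), Hxp, (proj1 Hx). ring. }
  assert (Hd : dot n d d <> 0).
  { intros Z. assert (p = x).
    { apply dot_self_eq0_vzero in Z; [| apply vanish_above_vsub; [apply Hp | exact (proj2 Hx)]].
      apply functional_extensionality; intro i.
      assert (d i = 0) by (rewrite Z; reflexivity). unfold d, vsub in H. lra. }
    subst p. destruct Hp as [_ [Z' | Kx]].
    - rewrite (proj1 Hx) in Z'. lra.
    - rewrite normalize_sphere_id in Kx; auto. }
  set (a := vnorm n p). assert (Ha : 0 <= a) by apply sqrt_pos.
  assert (Haa : dot n p p = a²) by (unfold a; rewrite vnorm_sqr; reflexivity).
  assert (Ha1 : a < 1).
  { assert (0 < dot n d d) by (pose proof (dot_self_ge0 n d); lra).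
    rewrite Hdd, Haa in H. unfold Rsqr in H. nra. }
  assert (Hvd : vnorm n d = sqrt (1 - a²)) by (unfold vnorm; rewrite Hdd, Haa; reflexivity).
  assert (Hvd0 : 0 < vnorm n d) by (apply vnorm_pos; assumption).
  assert (Hxz : dot n x (normalize n d) = - sqrt (1 - a²)).
  { rewrite dot_normalize_r. unfold d at 1. rewrite dot_vsub_r, Hxp, (proj1 Hx), Haa, Hvd.
    assert (Hs : sqrt (1 - a²) * sqrt (1 - a²) = 1 - a²) by (apply sqrt_sqrt; unfold Rsqr; nra).
    replace (a² - 1) with (- (sqrt (1 - a²) * sqrt (1 - a²))) by lra.
    field. rewrite <- Hvd. lra. }
  split; [assumption | split; [|split]].
  - split; [apply normalize_sphere; [apply vanish_above_vsub; [apply Hp | exact (proj2 Hx)] | assumption]|].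
    intros k Hk. rewrite dot_normalize_r. apply Rdiv_le_0_compat; [|assumption].
    pose proof (Hsep k (in_cone_sphere n K k (proj1 HK k Hk) Hk)) as Hk'.
    unfold d. rewrite dot_vsub_r, (dot_comm n k p), (dot_comm n k x).
    rewrite dot_vsub_l in Hk'. lra.
  - rewrite Hxz, <- Hvd. lra.
  - unfold sdist. rewrite Hxz. apply acos_opp_sqrt. lra.
Qed.

Lemma polar_separation (K : pset) (x k0 : pt) : sclosed n K -> cone_convex n K -> sphere n x ->
  K k0 -> 0 <= dot n x k0 -> ~ K x ->
  exists z k, polar n K z /\ dot n x z < 0 /\ K k /\ sdist n x k <= sdist n x z - PI / 2.
Proof.
  intros HK Hconv Hx Hk0 Hxk0 Hnx.
  destruct (cone_projection n K x HK Hconv (proj2 Hx)) as [p [Hp [Hsep Horth]]].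
  destruct (projection_polar_point K x p HK Hx Hnx Hp Hsep Horth) as (Ha1 & Hz & Hxz & Hsz).
  exists (normalize n (vsub p x)).
  destruct (Req_dec (dot n p p) 0) as [Zp | NZp].
  - exists k0. split; [assumption | split; [assumption | split; [assumption|]]].
    assert (Ha0 : vnorm n p = 0) by (unfold vnorm; rewrite Zp; apply sqrt_0).
    pose proof (dot_nonneg_sdist_le n x k0 Hx (proj1 HK k0 Hk0) Hxk0).
    rewrite Hsz, Ha0, acos_0. lra.
  - destruct Hp as [_ [? | Kp]]; [contradiction|].
    exists (normalize n p). split; [assumption | split; [assumption | split; [assumption|]]].
    assert (Hxp : dot n x p = dot n p p) by (rewrite dot_vsub_l in Horth; lra).
    unfold sdist at 1. rewrite dot_normalize_r, Hxp, <- vnorm_sqr.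
    replace ((vnorm n p)² / vnorm n p) with (vnorm n p)
      by (pose proof (vnorm_pos n p NZp); unfold Rsqr; field; lra).
    lra.
Qed.

Lemma bipolar (P : pt) (K : pset) : admissible P K -> polar n (polar n K) = K.
Proof.
  intros HKa. pose proof (polar_admissible P K HKa) as (_ & HK'P & _).
  destruct HKa as (HK & HKP & HKh & Hconv).
  apply functional_extensionality; intro x. apply propositional_extensionality. split.
  - intros Hx. destruct (classic (K x)) as [|Hnx]; [assumption|]. exfalso.
    destruct Hx as [Sx Hx].
    destruct (polar_separation K x P HK Hconv Sx HKP) as (z & k & Hz & Hxz & _);
      [rewrite dot_comm; exact (Hx P HK'P) | assumption |].
    specialize (Hx z Hz). rewrite dot_comm in Hx. lra.
  - intros Kx. split; [exact (proj1 HK x Kx)|]. intros z [_ Hz]. rewrite dot_comm. auto.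
Qed.

Lemma dist_polar_ge (K : pset) (x z : pt) : nonempty K -> (forall k, K k -> sphere n k) ->
  sphere n x -> polar n K z -> sdist n x z - PI / 2 <= dist_pt_set n x K.
Proof.
  intros HKn HKs Sx [Sz Hz]. apply dist_pt_set_ge; [assumption|]. intros k Hk.
  pose proof (sdist_triangle n x k z Sx (HKs k Hk) Sz).
  pose proof (dot_nonneg_sdist_le n k z (HKs k Hk) Sz (Hz k Hk)). lra.
Qed.

Lemma hexcess_polar_le (P : pt) (A B : pset) : admissible P A -> admissible P B ->
  hexcess n A B <= hexcess n (polar n B) (polar n A).
Proof.
  intros HA HB.
  pose proof (polar_admissible P A HA) as HA'. pose proof (polar_admissible P B HB) as HB'.
  assert (nA : nonempty A) by (exists P; apply HA). assert (nB : nonempty B) by (exists P; apply HB).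
  assert (nA' : nonempty (polar n A)) by (exists P; apply HA').
  assert (nB' : nonempty (polar n B)) by (exists P; apply HB').
  apply hexcess_le; [assumption|]. intros x Hx.
  assert (Sx : sphere n x) by (apply HA; assumption).
  destruct (classic (B x)) as [Bx | NBx].
  - apply Rle_trans with 0; [|apply hexcess_ge0; assumption].
    pose proof (dist_pt_set_le n x x B Bx). rewrite sdist_refl in H by assumption. lra.
  - destruct HB as (HBc & HBP & HBh & HBv).
    destruct (polar_separation B x P HBc HBv Sx HBP) as (z & k & Hz & _ & Hk & Hxk);
      [rewrite dot_comm; apply HA; assumption | assumption |].
    pose proof (dist_pt_set_le n x k B Hk).
    pose proof (hexcess_ge n _ _ z nA' Hz).
    pose proof (dist_polar_ge (polar n A) z x nA' (polar_sphere A) (polar_sphere B z Hz)).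
    rewrite (bipolar P A HA), sdist_comm in H1. specialize (H1 Hx). lra.
Qed.

Lemma hdist_polar (P : pt) (A B : pset) : admissible P A -> admissible P B ->
  hdist n (polar n A) (polar n B) = hdist n A B.
Proof.
  intros HA HB.
  assert (Hex : forall A B, admissible P A -> admissible P B ->
    hexcess n (polar n B) (polar n A) = hexcess n A B).
  { intros A' B' HA' HB'. apply Rle_antisym; [|apply hexcess_polar_le with P; assumption].
    pose proof (hexcess_polar_le P _ _ (polar_admissible P B' HB') (polar_admissible P A' HA')).
    rewrite (bipolar P A' HA'), (bipolar P B' HB') in H. assumption. }
  unfold hdist. rewrite (Hex A B HA HB), (Hex B A HB HA). apply Rmax_comm.
Qed.

End Polar.

(** * Wulff shapes *)

Section Wulff.

Variable n : nat.

Lemma coords_convergent_subseq (u : nat -> pt) : (forall k i, -1 <= u k i <= 1) ->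
  exists phi l, strictly_increasing phi /\ converges_to n (fun k => u (phi k)) l.
Proof.
  intros Hb. unfold converges_to. induction n as [|m IH].
  - destruct (bounded_seq_convergent_subseq (fun k => u k 0%nat)) as [phi [l [H1 H2]]];
      [intros; apply Hb|].
    exists phi, (fun _ => l). split; [assumption|]. intros i Hi. replace i with 0%nat by lia. exact H2.
  - destruct IH as [phi [l [H1 H2]]].
    destruct (bounded_seq_convergent_subseq (fun k => u (phi k) (S m))) as [psi [l' [H3 H4]]];
      [intros; apply Hb|].
    exists (fun k => phi (psi k)), (fun i => if Nat.eqb i (S m) then l' else l i). split.
    + intros k. pose proof (strictly_increasing_le phi H1 (S (psi k)) (psi (S k)) (H3 k)).
      specialize (H1 (psi k)). lia.
    + intros i Hi. destruct (Nat.eqb_spec i (S m)) as [->|Hne]; [exact H4|].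
      apply (Un_cv_subseq (fun k => u (phi k) i)); [assumption|]. apply H2. lia.
Qed.

Lemma sclosed_convergent_subseq (W : pset) (u : nat -> pt) : sclosed n W -> (forall k, W (u k)) ->
  exists phi l, strictly_increasing phi /\ W l /\ converges_to n (fun k => u (phi k)) l.
Proof.
  intros HW Hu. assert (Su : forall k, sphere n (u k)) by (intros k; apply HW, Hu).
  destruct (coords_convergent_subseq u) as [phi [l0 [Hphi Hl0]]];
    [intros k i; apply (sphere_coord_bound n), Su|].
  set (l := fun i => if Compare_dec.le_lt_dec i n then l0 i else 0).
  assert (Hl : converges_to n (fun k => u (phi k)) l)
    by (intros i Hi; unfold l; destruct Compare_dec.le_lt_dec; [apply Hl0 | lia]; assumption).
  assert (Sl : sphere n l).
  { split; [|intros i Hi; unfold l; destruct Compare_dec.le_lt_dec; [lia | reflexivity]].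
    apply UL_sequence with (fun k => dot n (u (phi k)) (u (phi k))); [apply Un_cv_dot; assumption|].
    eapply Un_cv_ext; [|apply (Un_cv_const 1)]. intros k; simpl. symmetry; apply Su. }
  exists phi, l. split; [assumption | split; [|assumption]].
  apply (proj2 HW); [assumption|]. intros eps He.
  destruct (acos_small eps He) as [c [Hc1 Hc2]].
  assert (Hcv : Un_cv (fun k => dot n l (u (phi k))) 1)
    by (rewrite <- (proj1 Sl); apply Un_cv_dot; [intros i _; apply Un_cv_const | assumption]).
  destruct (Un_cv_eventually_gt _ _ c Hcv) as [N HN]; [lra|].
  exists (u (phi N)). split; [apply Hu|].
  apply Rlt_le_trans with (acos c); [|assumption].
  apply sdist_lt_acos; [assumption | apply Su | lra | apply HN; lia].
Qed.

Lemma sclosed_dot_pos_uniform (P : pt) (W : pset) : sclosed n W -> (forall w, W w -> 0 < dot n P w) ->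
  exists m, 0 < m /\ forall w, W w -> m <= dot n P w.
Proof.
  intros HW Hpos. apply NNPP. intros Hno.
  assert (Hs : forall k : nat, exists w, W w /\ dot n P w < / INR (S k)).
  { intros k. apply NNPP. intros H. apply Hno. exists (/ INR (S k)). split; [apply inv_INR_S_pos|].
    intros w Hw. destruct (Rle_lt_dec (/ INR (S k)) (dot n P w)); [assumption|].
    exfalso. apply H. exists w. split; assumption. }
  set (u := fun k => proj1_sig (constructive_indefinite_description _ (Hs k))).
  assert (Hu : forall k, W (u k) /\ dot n P (u k) < / INR (S k))
    by (intros k; unfold u; destruct constructive_indefinite_description; assumption).
  destruct (sclosed_convergent_subseq W u HW (fun k => proj1 (Hu k))) as [phi [l [Hphi [Wl Hl]]]].
  assert (dot n P l <= 0).
  { apply (Un_cv_le_of_le_inv (fun k => dot n P (u (phi k)))).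
    - apply Un_cv_dot; [intros i _; apply Un_cv_const | assumption].
    - intros k. pose proof (proj2 (Hu (phi k))).
      assert (/ INR (S (phi k)) <= / INR (S k)).
      { apply Rinv_le_contravar; [apply lt_0_INR; lia | apply le_INR].
        pose proof (strictly_increasing_ge phi Hphi k). lia. }
      lra. }
  pose proof (Hpos l Wl). lra.
Qed.

Lemma HWulff_sphere (P : pt) (W : pset) : HWulff n P W -> forall x, W x -> sphere n x.
Proof. intros HW. apply HW. Qed.

Lemma HWulff_dot_pos (P : pt) (W : pset) : HWulff n P W -> forall x, W x -> 0 < dot n P x.
Proof.
  intros HW x Hx. destruct (Rle_lt_dec (dot n P x) 0) as [Hle|]; [|assumption]. exfalso.
  apply (proj1 (proj2 HW) x Hx). split; [exact (HWulff_sphere P W HW x Hx)|].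
  rewrite dot_vopp_l. lra.
Qed.

Lemma sconvex_cone_convex (W : pset) : sconvex n W -> cone_convex n W.
Proof.
  intros [_ Harc] k1 k2 a b H1 H2 Ha Hb Hv.
  assert (Hab : 0 < a + b).
  { destruct (Rle_lt_dec (a + b) 0); [|assumption]. exfalso.
    replace a with 0 in Hv by lra. replace b with 0 in Hv by lra.
    apply Hv. rewrite dot_vcomb_l, !dot_vcomb_r. ring. }
  set (t := b / (a + b)).
  assert (Ht : 0 <= t <= 1).
  { unfold t. split; [apply Rdiv_le_0_compat; lra|].
    apply Rmult_le_reg_r with (a + b); [lra|]. unfold Rdiv. rewrite Rmult_assoc, Rinv_l; lra. }
  pose proof (Harc k1 k2 H1 H2 t Ht) as Hk.
  change (W (normalize n (vcomb (1 - t) k1 t k2))) in Hk.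
  replace (vcomb (1 - t) k1 t k2) with (vscale (/ (a + b)) (vcomb a k1 b k2)) in Hk
    by (apply functional_extensionality; intro; unfold vcomb, vscale, t; field; lra).
  rewrite normalize_vscale in Hk; [assumption | apply Rinv_0_lt_compat | ]; assumption.
Qed.

Lemma cone_convex_sconvex (P : pt) (W : pset) : sphere n P -> cone_convex n W ->
  (forall Q, W Q -> 0 < dot n P Q) -> sconvex n W.
Proof.
  intros SP Hconv Hpos. split.
  - exists (vopp P). split; [apply sphere_vopp; assumption|].
    intros Q HQ [_ HPQ]. rewrite dot_vopp_l in HPQ. pose proof (Hpos Q HQ). lra.
  - intros Q1 Q2 H1 H2 t Ht. apply Hconv; [assumption .. | lra | lra |].
    intros Z. apply (dot_self_eq0_l n _ P) in Z. rewrite dot_comm, dot_vcomb_r in Z.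
    pose proof (Hpos Q1 H1). pose proof (Hpos Q2 H2).
    destruct (Req_dec t 0) as [->|]; nra.
Qed.

Lemma HWulff_admissible (P : pt) (W : pset) : HWulff n P W -> admissible n P W.
Proof.
  intros HW. pose proof (HWulff_dot_pos P W HW) as Hpos.
  destruct HW as (HS & _ & [HWP _] & [Hconv _]).
  split; [apply HS | split; [assumption | split]].
  - intros x Hx. left. auto.
  - apply sconvex_cone_convex. assumption.
Qed.

(* If Q in W° had P.Q = 0, the point cos(s) P - sin(s) Q, which lies in W for small s > 0,
   would have negative inner product with Q. *)
Lemma polar_dot_pos (P : pt) (W : pset) : sphere n P -> interior_pt n W P ->
  forall Q, polar n W Q -> 0 < dot n P Q.
Proof.
  intros SP [HWP [eps [He Hint]]] Q [SQ HQ].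
  destruct (HQ P HWP) as [|H0]; [assumption|]. exfalso.
  set (s := Rmin (eps / 2) 1).
  assert (Hs0 : 0 < s) by (apply Rmin_glb_lt; lra).
  assert (Hs1 : s <= 1) by apply Rmin_r. assert (Hs2 : s <= eps / 2) by apply Rmin_l.
  pose proof PI2_1.
  set (w := vcomb (cos s) P (- sin s) Q).
  assert (Sw : sphere n w).
  { split; [|apply vanish_above_vcomb; [exact (proj2 SP) | exact (proj2 SQ)]].
    unfold w. rewrite dot_vcomb_l, !dot_vcomb_r, (dot_comm n Q P), <- H0, (proj1 SP), (proj1 SQ).
    pose proof (sin2_cos2 s). unfold Rsqr in *. lra. }
  assert (Ww : W w).
  { apply Hint; [assumption|]. unfold sdist, w. rewrite dot_vcomb_r, <- H0, (proj1 SP).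
    replace (cos s * 1 + - sin s * 0) with (cos s) by ring. rewrite acos_cos; lra. }
  pose proof (HQ w Ww) as Hw. unfold w in Hw. rewrite dot_vcomb_l, <- H0, (proj1 SQ) in Hw.
  pose proof (sin_gt_0 s Hs0 ltac:(lra)). lra.
Qed.

Lemma polar_interior_pt (P : pt) (W : pset) (m : R) : sphere n P -> (forall w, W w -> sphere n w) ->
  0 < m -> (forall w, W w -> m <= dot n P w) -> interior_pt n (polar n W) P.
Proof.
  intros SP HWs Hm HmW.
  split; [split; [assumption|] |].
  { intros w Hw. rewrite dot_comm. pose proof (HmW w Hw). lra. }
  destruct (sdist_small_vnorm_small n m Hm) as [eps [He Hclose]].
  exists eps. split; [assumption|]. intros Q SQ HPQ. split; [assumption|]. intros w Hw.
  pose proof (Hclose P Q SP SQ HPQ). pose proof (HmW w Hw).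
  pose proof (Rabs_dot_vsub_le n P Q w) as Hdiff. rewrite (sphere_vnorm n w (HWs w Hw)) in Hdiff.
  apply Rabs_le_bounds in Hdiff. rewrite dot_comm. lra.
Qed.

Lemma HWulff_polar (P : pt) (W : pset) : sphere n P -> HWulff n P W -> HWulff n P (polar n W).
Proof.
  intros SP HW.
  pose proof (polar_admissible n P W (HWulff_admissible P W HW)) as (HW'c & HW'P & _ & HW'v).
  pose proof (HWulff_sphere P W HW) as HWs.
  pose proof (polar_dot_pos P W SP (proj1 (proj2 (proj2 HW)))) as Hpos.
  destruct (sclosed_dot_pos_uniform P W (proj2 (proj1 HW)) (HWulff_dot_pos P W HW)) as [m [Hm HmW]].
  pose proof (polar_interior_pt P W m SP HWs Hm HmW) as Hint.
  split; [split; [exists P; assumption | assumption] | split; [| split; [assumption|]]].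
  - intros Q HQ [_ HQ']. rewrite dot_vopp_l in HQ'. pose proof (Hpos Q HQ). lra.
  - split; [apply (cone_convex_sconvex P); assumption | split; [assumption | exists P; assumption]].
Qed.

End Wulff.

(** * The closure of the Wulff shapes *)

Section Closure.

Variable n : nat.
Variable P : pt.
Hypothesis HP : sphere n P.

Lemma HWulff_cl_sphere (W : pset) : HWulff_cl n P W -> forall x, W x -> sphere n x.
Proof. intros HW. apply HW. Qed.

Lemma HWulff_nonempty (V : pset) : HWulff n P V -> nonempty V.
Proof. intros HV. exists P. exact (proj1 (proj1 (proj2 (proj2 HV)))). Qed.

Lemma HWulff_cl_contains (W : pset) : HWulff_cl n P W -> W P.
Proof.
  intros [[HWn HWc] Happ]. apply (proj2 HWc); [assumption|]. intros eps He.
  destruct (Happ eps He) as [V [HV Hd]].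
  destruct (hdist_lt_near_r n W V P eps HWn (proj1 (proj1 (proj2 (proj2 HV)))) Hd) as [x [Hx Hxe]].
  exists x. split; assumption.
Qed.

Lemma HWulff_cl_dot_nonneg (W : pset) : HWulff_cl n P W -> forall x, W x -> 0 <= dot n P x.
Proof.
  intros HW x Hx. destruct (Rle_lt_dec 0 (dot n P x)) as [|Hneg]; [assumption|]. exfalso.
  destruct (sdist_small_vnorm_small n (- dot n P x)) as [d [Hd Hclose]]; [lra|].
  destruct (proj2 HW d Hd) as [V [HV Hdist]].
  destruct (hdist_lt_near_l n W V x d (HWulff_nonempty V HV) Hx Hdist) as [y [Hy Hxy]].
  pose proof (Hclose x y (HWulff_cl_sphere W HW x Hx) (HWulff_sphere n P V HV y Hy) Hxy).
  pose proof (HWulff_dot_pos n P V HV y Hy).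
  pose proof (Rabs_dot_vsub_le n x y P) as Hdiff.
  rewrite (sphere_vnorm n P HP), (dot_comm n x P), (dot_comm n y P) in Hdiff.
  apply Rabs_le_bounds in Hdiff. lra.
Qed.

Lemma vnorm_vcomb_sub_lt (a b eta : R) (k1 k2 y1 y2 : pt) : 0 <= a -> 0 <= b -> 0 < a + b ->
  vnorm n (vsub k1 y1) < eta -> vnorm n (vsub k2 y2) < eta ->
  vnorm n (vsub (vcomb a k1 b k2) (vcomb a y1 b y2)) < (a + b) * eta.
Proof.
  intros Ha Hb Hab H1 H2.
  replace (vsub (vcomb a k1 b k2) (vcomb a y1 b y2))
    with (vcomb 1 (vscale a (vsub k1 y1)) 1 (vscale b (vsub k2 y2)))
    by (apply functional_extensionality; intro; unfold vcomb, vsub, vscale; ring).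
  eapply Rle_lt_trans; [apply vnorm_vcomb_le|].
  rewrite !vnorm_vscale, !Rabs_pos_eq by assumption.
  pose proof (sqrt_pos (dot n (vsub k1 y1) (vsub k1 y1))).
  pose proof (sqrt_pos (dot n (vsub k2 y2) (vsub k2 y2))).
  unfold vnorm in *. destruct (Req_dec a 0) as [->|]; nra.
Qed.

(* Approximate k1, k2 by points y1, y2 of a nearby Wulff shape V, whose normalized combination
   lies in V and is therefore close to some point of W. *)
Lemma HWulff_cl_cone_convex (W : pset) : HWulff_cl n P W -> cone_convex n W.
Proof.
  intros HW k1 k2 a b H1 H2 Ha Hb Hv.
  pose proof (HWulff_cl_sphere W HW) as HWs.
  set (v := vcomb a k1 b k2). fold v in Hv.
  assert (Tv : vanish_above n v)
    by (apply vanish_above_vcomb; [exact (proj2 (HWs k1 H1)) | exact (proj2 (HWs k2 H2))]).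
  assert (Hab : 0 < a + b).
  { destruct (Rle_lt_dec (a + b) 0); [|assumption]. exfalso.
    apply Hv. unfold v. replace a with 0 by lra. replace b with 0 by lra.
    rewrite dot_vcomb_l, !dot_vcomb_r. ring. }
  apply (proj2 (proj2 (proj1 HW))); [apply normalize_sphere; assumption|].
  intros eps He.
  destruct (normalize_sdist_small n v (eps / 2) Tv Hv) as [delta [Hdelta Hclose]]; [lra|].
  destruct (sdist_small_vnorm_small n (delta / (a + b))) as [d0 [Hd0 Hclose0]];
    [apply Rdiv_lt_0_compat; assumption|].
  set (d := Rmin d0 (eps / 2)).
  assert (Hd : 0 < d) by (apply Rmin_glb_lt; lra).
  pose proof (Rmin_l d0 (eps / 2)). pose proof (Rmin_r d0 (eps / 2)). fold d in H, H0.
  destruct (proj2 HW d Hd) as [V [HV Hdist]].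
  pose proof (HWulff_sphere n P V HV) as HVs.
  destruct (hdist_lt_near_l n W V k1 d (HWulff_nonempty V HV) H1 Hdist) as [y1 [Hy1 Hky1]].
  destruct (hdist_lt_near_l n W V k2 d (HWulff_nonempty V HV) H2 Hdist) as [y2 [Hy2 Hky2]].
  set (u := vcomb a y1 b y2).
  assert (Hvu : vnorm n (vsub u v) < delta).
  { rewrite vnorm_vsub_comm.
    replace delta with ((a + b) * (delta / (a + b))) by (field; lra).
    apply vnorm_vcomb_sub_lt; try assumption; apply Hclose0; auto; lra. }
  destruct (Hclose u) as [Hu Hvu'];
    [apply vanish_above_vcomb; [exact (proj2 (HVs y1 Hy1)) | exact (proj2 (HVs y2 Hy2))] | assumption |].
  assert (Vu : V (normalize n u)).
  { apply (HWulff_admissible n P V HV); assumption. }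
  destruct (hdist_lt_near_r n W V (normalize n u) d (ex_intro _ k1 H1) Vu Hdist) as [w [Hw Huw]].
  exists w. split; [assumption|].
  pose proof (sdist_triangle n (normalize n v) (normalize n u) w
    (normalize_sphere n v Tv Hv) (HVs _ Vu) (HWs w Hw)). lra.
Qed.

Lemma HWulff_cl_admissible (W : pset) : HWulff_cl n P W -> admissible n P W.
Proof.
  intros HW. split; [apply HW | split; [|split]].
  - apply HWulff_cl_contains; assumption.
  - apply HWulff_cl_dot_nonneg; assumption.
  - apply HWulff_cl_cone_convex; assumption.
Qed.

Lemma HWulff_cl_polar (W : pset) : HWulff_cl n P W -> HWulff_cl n P (polar n W).
Proof.
  intros HW. pose proof (HWulff_cl_admissible W HW) as HWa.
  pose proof (polar_admissible n P W HWa) as HWa'.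
  split; [split; [exists P; apply HWa' | apply HWa'] |].
  intros eps He. destruct (proj2 HW eps He) as [V [HV Hd]].
  exists (polar n V). split; [apply HWulff_polar; assumption|].
  rewrite (hdist_polar n P W V HWa (HWulff_admissible n P V HV)). assumption.
Qed.

End Closure.

Lemma polar_bijective_isometry (n : nat) (P : pt) (C : pset -> Prop) :
  (forall W, C W -> admissible n P W) -> (forall W, C W -> C (polar n W)) ->
  (forall W, C W -> C (polar n W)) /\
  (forall W1 W2, C W1 -> C W2 -> set_eq (polar n W1) (polar n W2) -> set_eq W1 W2) /\
  (forall V, C V -> exists W, C W /\ set_eq (polar n W) V) /\
  (forall W1 W2, C W1 -> C W2 -> hdist n (polar n W1) (polar n W2) = hdist n W1 W2).
Proof.
  intros Hadm Hpolar. split; [exact Hpolar | split; [| split]].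
  - intros W1 W2 H1 H2 E x.
    assert (E' : polar n W1 = polar n W2)
      by (apply functional_extensionality; intro y; apply propositional_extensionality, E).
    rewrite <- (bipolar n P W1 (Hadm W1 H1)), <- (bipolar n P W2 (Hadm W2 H2)), E'. tauto.
  - intros V HV. exists (polar n V). split; [apply Hpolar; assumption|].
    rewrite (bipolar n P V (Hadm V HV)). intros x; tauto.
  - intros W1 W2 H1 H2. apply hdist_polar with P; apply Hadm; assumption.
Qed.

Theorem theorem1 (n : nat) (P : pt) (hn : (0 < n)%nat) (hP : sphere n P) :
  (* (1) *)
  ((forall W, HWulff n P W -> HWulff n P (polar n W)) /\
   (forall W1 W2, HWulff n P W1 -> HWulff n P W2 ->
      set_eq (polar n W1) (polar n W2) -> set_eq W1 W2) /\
   (forall V, HWulff n P V -> exists W, HWulff n P W /\ set_eq (polar n W) V) /\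
   (forall W1 W2, HWulff n P W1 -> HWulff n P W2 ->
      hdist n (polar n W1) (polar n W2) = hdist n W1 W2)) /\
  (* (2) *)
  ((forall W, HWulff_cl n P W -> HWulff_cl n P (polar n W)) /\
   (forall W1 W2, HWulff_cl n P W1 -> HWulff_cl n P W2 ->
      set_eq (polar n W1) (polar n W2) -> set_eq W1 W2) /\
   (forall V, HWulff_cl n P V -> exists W, HWulff_cl n P W /\ set_eq (polar n W) V) /\
   (forall W1 W2, HWulff_cl n P W1 -> HWulff_cl n P W2 ->
      hdist n (polar n W1) (polar n W2) = hdist n W1 W2)).
Proof.
  split; apply (polar_bijective_isometry n P).
  - apply HWulff_admissible.
  - intros W. apply HWulff_polar. exact hP.
  - apply HWulff_cl_admissible. exact hP.
  - apply HWulff_cl_polar. exact hP.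
Qed.
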